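(* Let $k\geq2$. Then $$F_k(x,p)=\sum_{j=0}^{k-2}J_j(p)x^j+\frac{x^{k-1}}{1-(k-1)x^2}\bigl((k-1)J_{k-2}(p)x+J_{k-1}(p)\bigr).$$ Moreover, for all $n\geq0$, the number of involutions of length $k+2n$ that avoid all patterns in $\mathcal{F}_k$ is $(k-1)^{n+1}I_{k-2}$, and the number of involutions of length $k+2n-1$ that avoid all patterns in $\mathcal{F}_k$ is $(k-1)^nI_{k-1}$.
   Context: $\mathcal{F}_k=\{\sigma\in\mathfrak{S}_k:\sigma_1=1\}$. An involution is a permutation $\pi$ with $\pi_{\pi_i}=i$ for all $i$; $\mathcal{I}_n(T)$ is the set of involutions of $[n]$ avoiding (in the classical pattern sense) every pattern in $T$; $\mathcal{I}_0$ contains only the empty permutation. $I_n$ is the number of involutions of $[n]$. $J_n(p)=\sum_{\pi\in\mathcal{I}_n}p^{\mathrm{fix}(\pi)}$, where $\mathrm{fix}(\pi)$ is the number of fixed points; $J_0=1,J_1=p$, $J_n=pJ_{n-1}+(n-1)J_{n-2}$. $F_k(x,p)=\sum_{n\ge0}\sum_{\pi\in\mathcal{I}_n(\mathcal{F}_k)}p^{\mathrm{fix}(\pi)}x^n$. *)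

From HB Require Import structures.
From mathcomp Require Import all_boot all_order all_algebra all_fingroup.
Set Implicit Arguments. Unset Strict Implicit. Unset Printing Implicit Defensive.
Import GRing.Theory.
Local Open Scope ring_scope.

(* Permutations of [n] are represented by 'S_n = {perm 'I_n}, positions 0..n-1. *)

Definition involutionb n (pi : 'S_n) : bool := [forall i, pi (pi i) == i].

Definition fixn n (pi : 'S_n) : nat := #|[set i | pi i == i]|.

Definition containsb n k (pi : 'S_n) (sigma : 'S_k) : bool :=
  [exists f : {ffun 'I_k -> 'I_n},
     [forall a : 'I_k, forall b : 'I_k,
        ((a < b)%N ==> (f a < f b)%N) &&
        ((pi (f a) < pi (f b))%N == (sigma a < sigma b)%N)]].

(* sigma belongs to F_k : its first entry is 1, i.e. sigma(0) = 0 in 0-based terms *)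
Definition inFk k (sigma : 'S_k) : bool :=
  [forall i : 'I_k, (val i == 0%N) ==> (val (sigma i) == 0%N)].

Definition avoidsFk k n (pi : 'S_n) : bool :=
  [forall sigma : 'S_k, inFk sigma ==> ~~ containsb pi sigma].

Definition Inv (n : nat) : nat := #|[set pi : 'S_n | involutionb pi]|.

(* J_n(p) = sum over involutions of [n] of p^fix, as a polynomial in p *)
Definition J (n : nat) : {poly int} :=
  \sum_(pi : 'S_n | involutionb pi) 'X^(fixn pi).

(* coefficient of x^n in F_k(x,p): sum over I_n(F_k) of p^fix *)
Definition Fcoef (k n : nat) : {poly int} :=
  \sum_(pi : 'S_n | involutionb pi && avoidsFk k pi) 'X^(fixn pi).

Definition numAvoid (k n : nat) : nat :=
  #|[set pi : 'S_n | involutionb pi && avoidsFk k pi]|.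

(* Formal power series in x with coefficients in Z[p], as coefficient functions,
   with the Cauchy product. *)
Definition fps := nat -> {poly int}.
Definition fps_mul (f g : fps) : fps :=
  fun n => \sum_(i < n.+1) f i * g (n - i)%N.
(* the power series of a polynomial in x (x is the outer variable) *)
Definition fps_of (q : {poly {poly int}}) : fps := fun n => q`_n.

Definition denom (k : nat) : {poly {poly int}} := 1 - (k.-1)%:R * 'X^2.

(* right-hand side times the denominator:
   (1-(k-1)x^2) * sum_{j=0}^{k-2} J_j x^j + x^(k-1) ((k-1) J_{k-2} x + J_{k-1}) *)
Definition numer (k : nat) : {poly {poly int}} :=
  denom k * (\sum_(j < k.-1) (J j)%:P * 'X^j)
  + 'X^(k.-1) * ((k.-1)%:R * (J (k.-2))%:P * 'X + (J (k.-1))%:P).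

From HB Require Import structures.
From mathcomp Require Import all_boot all_order all_algebra all_fingroup.
From mathcomp Require Import zify ring.
From Stdlib Require Import FunctionalExtensionality.
Set Implicit Arguments. Unset Strict Implicit. Unset Printing Implicit Defensive.
Import GRing.Theory.

(* An involution of [n + 2] avoiding F_(k+1), with n + 2 > k, sends 1 to one of
   its last k positions t: otherwise positions t, ..., t + k would carry a
   pattern starting with its minimum pi(t) = 1.  Deleting the 2-cycle (1 t)
   leaves an avoiding involution of [n] with the same fixed points, and each
   of those arises from exactly k such involutions.  So the coefficients of
   F_(k+1) equal J_n up to degree k and get multiplied by k every two steps
   beyond, which is both the rational generating function and the counts. *)

Lemma incr_ord_inj k n (f : 'I_k -> 'I_n) :
  {homo f : a b / (a < b)%N} -> injective f.
Proof.
move=> f_incr a b fab; apply/eqP; apply: contraT; rewrite neq_ltn.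
by case/orP => /f_incr; rewrite fab ltnn.
Qed.

Lemma containsbP n k (pi : 'S_n) (sigma : 'S_k) :
  reflect (exists2 f : 'I_k -> 'I_n, {homo f : a b / (a < b)%N} &
             forall a b, (pi (f a) < pi (f b))%N = (sigma a < sigma b)%N)
          (containsb pi sigma).
Proof.
apply: (iffP existsP) => [[f /forallP f_occ] | [f f_incr f_pat]].
  exists f => [a b | a b]; have /andP[/implyP f_incr /eqP //] := forallP (f_occ a) b.
exists [ffun a => f a]; apply/forallP => a; apply/forallP => b.
by rewrite !ffunE f_pat eqxx andbT; apply/implyP; apply: f_incr.
Qed.

Lemma avoidsFk_small k n (pi : 'S_n) : (n < k)%N -> avoidsFk k pi.
Proof.
move=> n_lt_k; apply/forallP => sigma; apply/implyP => _.
apply/containsbP => -[f /incr_ord_inj f_inj _].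
by have := leq_card f f_inj; rewrite !card_ord leqNgt n_lt_k.
Qed.

(* Standardization: [sigma a] is the rank of [g a] among the values of [g]. *)
Lemma exists_perm_ltn_iso k (g : 'I_k -> nat) : injective g ->
  exists sigma : 'S_k, forall a b, (g a < g b)%N = (sigma a < sigma b)%N.
Proof.
move=> g_inj; pose rank a := #|[set b | (g b < g a)%N]|.
have rank_lt a : (rank a < k)%N.
  have : [set b | (g b < g a)%N] \subset [set~ a].
    by apply/subsetP => b; rewrite !inE; apply: contraTneq => ->; rewrite ltnn.
  by move/subset_leq_card; rewrite cardsC1 card_ord /rank; have := ltn_ord a; lia.
have rank_mono a b : (g a < g b)%N -> (rank a < rank b)%N.
  move=> gab; apply: proper_card; apply/properP; split.
    by apply/subsetP => c; rewrite !inE => /ltn_trans; apply.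
  by exists a; rewrite !inE ?ltnn.
have rank_inj : injective (fun a => Ordinal (rank_lt a)).
  move=> a b /(congr1 val) /= rab; apply: g_inj.
  by case: (ltngtP (g a) (g b)) => // /rank_mono; rewrite rab ltnn.
exists (perm rank_inj) => a b; rewrite !permE /=.
apply/idP/idP => [/rank_mono // | rab].
case: (ltngtP (g a) (g b)) => // [/rank_mono gba | /g_inj eq_ab].
  by move: (ltn_trans rab gba); rewrite ltnn.
by move: rab; rewrite eq_ab ltnn.
Qed.

Lemma card_ord_above n k (t : 'I_n.+1) (g : 'I_k -> 'I_n.+1) :
  injective g -> (forall b, t < g b)%N -> (k <= n - t)%N.
Proof.
move=> g_inj g_gt.
have h_lt b : (g b - t.+1 < n - t)%N by have := g_gt b; have := ltn_ord (g b); lia.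
have h_inj : injective (fun b => Ordinal (h_lt b)).
  move=> a b /(congr1 val) /= hab; apply: g_inj; apply: ord_inj.
  by have := g_gt a; have := g_gt b; lia.
by have := leq_card _ h_inj; rewrite !card_ord.
Qed.

Section AddCycle0.
Variables (m : nat) (t : 'I_m.+2).

Definition lift0t (j : 'I_m) : 'I_m.+2 := lift t (lift ord0 j).

(* [add_cycle0 s] has the 2-cycle (0 t) and acts as [s] on the other
   positions, taken in increasing order. *)
Definition add_cycle0 (s : 'S_m) : 'S_m.+2 :=
  (lift_perm t t (lift_perm ord0 ord0 s) * tperm ord0 t)%g.

Lemma ltn_lift0t a b : (lift0t a < lift0t b)%N = (a < b)%N.
Proof. by rewrite /= !ltnNge !leq_bump2. Qed.

Lemma lift0t_inj : injective lift0t.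
Proof. by move=> a b /lift_inj /lift_inj. Qed.

Lemma lift0t_neq0 j : lift0t j != ord0.
Proof. by rewrite -val_eqE /= /bump; case: (t <= _)%N. Qed.

Lemma lift0t_neqt j : lift0t j != t.
Proof. by rewrite eq_sym neq_lift. Qed.

Hypothesis t_neq0 : t != ord0.

Lemma lift_t_ord0 : lift t ord0 = ord0.
Proof.
apply: val_inj; rewrite /= /bump leqn0.
by move: t_neq0; rewrite -val_eqE => /negbTE ->.
Qed.

Lemma lift0tP (x : 'I_m.+2) : [\/ x = ord0, x = t | exists j, x = lift0t j].
Proof.
case: (unliftP t x) => [y -> | ->]; last exact: Or32.
case: (unliftP ord0 y) => [j -> | ->]; last by rewrite lift_t_ord0; apply: Or31.
by apply: Or33; exists j.
Qed.

Lemma add_cycle0_0 s : add_cycle0 s ord0 = t.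
Proof.
rewrite permM -[in lift_perm _ _ _ _]lift_t_ord0 lift_perm_lift lift_perm_id.
by rewrite lift_t_ord0 tpermL.
Qed.

Lemma add_cycle0_t s : add_cycle0 s t = ord0.
Proof. by rewrite permM lift_perm_id tpermR. Qed.

Lemma add_cycle0_lift0t s j : add_cycle0 s (lift0t j) = lift0t (s j).
Proof.
rewrite permM !lift_perm_lift -/(lift0t (s j)) tpermD //.
  by rewrite eq_sym lift0t_neq0.
by rewrite eq_sym lift0t_neqt.
Qed.

Lemma involutionb_add_cycle0 s : involutionb (add_cycle0 s) = involutionb s.
Proof.
apply/forallP/forallP => s_inv x.
  by have := s_inv (lift0t x); rewrite !add_cycle0_lift0t (inj_eq lift0t_inj).
case: (lift0tP x) => [-> | -> | [j ->]].
- by rewrite add_cycle0_0 add_cycle0_t.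
- by rewrite add_cycle0_t add_cycle0_0.
- by rewrite !add_cycle0_lift0t (inj_eq lift0t_inj).
Qed.

Lemma fixn_add_cycle0 s : fixn (add_cycle0 s) = fixn s.
Proof.
rewrite /fixn -(card_imset _ lift0t_inj); apply: eq_card => x; rewrite inE.
case: (lift0tP x) => [-> | -> | [j ->]].
- rewrite add_cycle0_0 (negbTE t_neq0); apply/esym/imsetP => -[j _ /eqP].
  by rewrite eq_sym (negbTE (lift0t_neq0 j)).
- rewrite add_cycle0_t eq_sym (negbTE t_neq0); apply/esym/imsetP => -[j _ /eqP].
  by rewrite eq_sym (negbTE (lift0t_neqt j)).
- by rewrite add_cycle0_lift0t (inj_eq lift0t_inj) mem_imset ?inE //; exact: lift0t_inj.
Qed.

Lemma containsb_add_cycle0 k (sigma : 'S_k) s :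
  containsb s sigma -> containsb (add_cycle0 s) sigma.
Proof.
case/containsbP => f f_incr f_pat; apply/containsbP; exists (lift0t \o f).
  by move=> a b /f_incr; rewrite /= ltn_lift0t.
by move=> a b; rewrite /= !add_cycle0_lift0t ltn_lift0t.
Qed.

End AddCycle0.

Lemma inFk_lift0 k (sigma : 'S_k.+1) b :
  inFk sigma -> (sigma ord0 < sigma (lift ord0 b))%N.
Proof.
move=> /forallP /(_ ord0) /implyP /(_ (eqxx _)) /eqP sigma0.
have -> : sigma ord0 = ord0 by apply: val_inj.
rewrite lt0n; apply: contra (neq_lift ord0 b) => /eqP sigma_b0.
by apply/eqP/(@perm_inj _ sigma)/ord_inj; rewrite sigma_b0.
Qed.

(* Placing the 2-cycle (0 t) with [t] among the last [k] positions creates no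
   new occurrence of a pattern starting with its minimum: such an occurrence
   cannot use position 0 or t, as it would need [k] larger values (resp.
   positions) beyond [t]. *)
Lemma containsb_add_cycle0_inFk m k (t : 'I_m.+2) (s : 'S_m)
    (sigma : 'S_k.+1) : t != ord0 -> (m.+2 - k <= t)%N -> inFk sigma ->
  containsb (add_cycle0 t s) sigma -> containsb s sigma.
Proof.
set H := add_cycle0 t s => t_neq0 t_ge sigma_in /containsbP[f f_incr f_pat].
have no_k_above (g : 'I_k -> 'I_m.+2) : injective g -> ~ (forall b, t < g b)%N.
  by move=> g_inj /(card_ord_above g_inj); have := ltn_ord t; lia.
have f0_lt b : (f ord0 < f (lift ord0 b))%N by apply: f_incr.
have Hf0_lt b : (H (f ord0) < H (f (lift ord0 b)))%N by rewrite f_pat inFk_lift0.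
have fS_inj : injective (fun b => f (lift ord0 b)).
  by move=> a b /(incr_ord_inj f_incr) /lift_inj.
have f_neq a : f a != ord0 /\ f a != t.
  case: (unliftP ord0 a) => [b -> | ->]; split; apply/eqP => f0.
  - by have := f0_lt b; rewrite f0.
  - by have := Hf0_lt b; rewrite f0 add_cycle0_t.
  - apply: (no_k_above (fun b => H (f (lift ord0 b)))).
      by move=> b1 b2 /perm_inj /fS_inj.
    by move=> b; have := Hf0_lt b; rewrite f0 add_cycle0_0.
  - by apply: (no_k_above _ fS_inj) => b; rewrite -f0.
have /fin_all_exists[g f_lift] a : exists j, f a = lift0t t j.
  have [f_neq0 f_neqt] := f_neq a.
  by case: (lift0tP t_neq0 (f a)) => // fa; rewrite fa eqxx in f_neq0 f_neqt.
apply/containsbP; exists g => [a b ab | a b].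
  by rewrite -(ltn_lift0t t) -!f_lift f_incr.
by rewrite -f_pat !f_lift !add_cycle0_lift0t (ltn_lift0t t).
Qed.

Lemma avoidsFk_add_cycle0 m k (t : 'I_m.+2) (s : 'S_m) :
  t != ord0 -> (m.+2 - k <= t)%N ->
  avoidsFk k.+1 (add_cycle0 t s) = avoidsFk k.+1 s.
Proof.
move=> t_neq0 t_ge; apply/forallP/forallP => avoid sigma;
  apply/implyP => sigma_in; apply: contra (implyP (avoid sigma) sigma_in).
  exact: containsb_add_cycle0.
exact: containsb_add_cycle0_inFk.
Qed.

(* If [pi 0 = t] came earlier, the [k + 1] consecutive positions from [t] would
   carry a pattern starting with its minimum [pi t = 0]. *)
Lemma avoidsFk_involution_ge m k (pi : 'S_m.+2) : (k <= m.+1)%N ->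
  involutionb pi -> avoidsFk k.+1 pi -> (m.+2 - k <= pi ord0)%N.
Proof.
move=> k_le /forallP pi_inv /forallP avoid; set t := pi ord0.
have pi_t : pi t = ord0 by apply/eqP; apply: pi_inv.
rewrite leqNgt; apply/negP => t_lt.
have f_lt (a : 'I_k.+1) : (t + a < m.+2)%N by have := ltn_ord a; lia.
pose f a := Ordinal (f_lt a).
have f_incr : {homo f : a b / (a < b)%N} by move=> a b ab; rewrite /= ltn_add2l.
have f0 : f ord0 = t by apply: val_inj; rewrite /= addn0.
have [sigma sigma_iso] : exists sigma : 'S_k.+1,
    forall a b, (pi (f a) < pi (f b))%N = (sigma a < sigma b)%N.
  apply: exists_perm_ltn_iso => a b /ord_inj /perm_inj.
  exact: (@incr_ord_inj _ _ f f_incr a b).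
have sigma0 : sigma ord0 = ord0.
  have := sigma_iso (sigma^-1 ord0)%g ord0; rewrite f0 pi_t ltn0 permKV.
  by move/esym/negbT; rewrite lt0n negbK => /eqP sigma0; apply: ord_inj.
have sigma_in : inFk sigma.
  apply/forallP => i; apply/implyP => /eqP i0.
  have -> : i = ord0 by apply: val_inj.
  by rewrite sigma0.
have /negP[] := implyP (avoid sigma) sigma_in.
by apply/containsbP; exists f.
Qed.

Lemma involution_add_cycle0 m (pi : 'S_m.+2) : pi ord0 != ord0 ->
  involutionb pi -> exists s, pi = add_cycle0 (pi ord0) s.
Proof.
set t := pi ord0 => t_neq0 /forallP pi_inv.
have pi_t : pi t = ord0 by apply/eqP; apply: pi_inv.
have /fin_all_exists[g pi_lift] j : exists i, pi (lift0t t j) = lift0t t i.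
  case: (lift0tP t_neq0 (pi (lift0t t j))) => [pi_j | pi_j | //].
    by have := lift0t_neqt t j; rewrite -(inj_eq (@perm_inj _ pi)) pi_t pi_j eqxx.
  by have := lift0t_neq0 t j; rewrite -(inj_eq (@perm_inj _ pi)) pi_j eqxx.
have g_inj : injective g.
  by move=> a b gab; apply/(@lift0t_inj _ t)/(@perm_inj _ pi); rewrite !pi_lift gab.
exists (perm g_inj); apply/permP => x; case: (lift0tP t_neq0 x) => [-> | -> | [j ->]].
- by rewrite add_cycle0_0.
- by rewrite add_cycle0_t.
- by rewrite add_cycle0_lift0t // permE pi_lift.
Qed.

Definition avoiding_involution k n (pi : 'S_n) := involutionb pi && avoidsFk k pi.

Section Recurrence.
Variables (k m : nat).
Hypothesis k_le : (k <= m.+1)%N.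

Definition cycle_end (c : 'I_k) : 'I_m.+2 := inord (m.+2 - k + c).

Lemma cycle_end_val c : cycle_end c = (m.+2 - k + c)%N :> nat.
Proof. by rewrite inordK //; have := ltn_ord c; lia. Qed.

Lemma cycle_end_neq0 c : cycle_end c != ord0.
Proof. by rewrite -val_eqE /= cycle_end_val; apply/eqP; lia. Qed.

Definition insert_cycle (x : 'I_k * 'S_m) : 'S_m.+2 :=
  add_cycle0 (cycle_end x.1) x.2.

Lemma avoiding_involution_insert_cycle x :
  avoiding_involution k.+1 (insert_cycle x) = avoiding_involution k.+1 x.2.
Proof.
rewrite /avoiding_involution involutionb_add_cycle0 ?cycle_end_neq0 //.
by rewrite avoidsFk_add_cycle0 ?cycle_end_neq0 // cycle_end_val leq_addr.
Qed.

Lemma insert_cycle_inj : injective insert_cycle.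
Proof.
move=> [c1 s1] [c2 s2] /= eq12.
have c12 : c1 = c2.
  have := congr1 (fun pi : 'S_m.+2 => val (pi ord0)) eq12.
  rewrite /= !add_cycle0_0 ?cycle_end_neq0 // !cycle_end_val.
  by move=> /= /eqP; rewrite eqn_add2l => /eqP /ord_inj.
subst c2; congr pair; apply/permP => j; apply: (@lift0t_inj _ (cycle_end c1)).
have := congr1 (fun pi : 'S_m.+2 => pi (lift0t (cycle_end c1) j)) eq12.
by rewrite /= !add_cycle0_lift0t.
Qed.

Lemma avoiding_involutions_image :
  [set pi : 'S_m.+2 | avoiding_involution k.+1 pi] =
  insert_cycle @: [set x | avoiding_involution k.+1 x.2].
Proof.
apply/setP => pi; rewrite inE; apply/idP/imsetP => [pi_av | [x]]; last first.
  by rewrite inE => x_av ->; rewrite avoiding_involution_insert_cycle.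
have /andP[pi_inv pi_avoid] := pi_av.
have t_ge := avoidsFk_involution_ge k_le pi_inv pi_avoid.
have c_lt : (pi ord0 - (m.+2 - k) < k)%N by have := ltn_ord (pi ord0); lia.
have t_neq0 : pi ord0 != ord0 by rewrite -val_eqE /=; apply/eqP; lia.
have [s pi_def] := involution_add_cycle0 t_neq0 pi_inv.
have t_end : pi ord0 = cycle_end (Ordinal c_lt).
  by apply: ord_inj; rewrite cycle_end_val /=; lia.
have pi_ins : pi = insert_cycle (Ordinal c_lt, s) by rewrite /insert_cycle -t_end.
exists (Ordinal c_lt, s) => //.
by rewrite inE -avoiding_involution_insert_cycle -pi_ins.
Qed.

Lemma sum_avoiding_involutions_rec (R : nmodType) (F : nat -> R) :
  (\sum_(pi : 'S_m.+2 | avoiding_involution k.+1 pi) F (fixn pi) =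
   (\sum_(s : 'S_m | avoiding_involution k.+1 s) F (fixn s)) *+ k)%R.
Proof.
rewrite (eq_bigl [in [set pi : 'S_m.+2 | avoiding_involution k.+1 pi]]); last first.
  by move=> pi; rewrite inE.
rewrite avoiding_involutions_image big_imset /=; last by move=> ? ? _ _ /insert_cycle_inj.
under eq_bigr => x _ do rewrite fixn_add_cycle0 ?cycle_end_neq0 //.
rewrite (eq_bigl (fun x : 'I_k * 'S_m => true && avoiding_involution k.+1 x.2)).
  rewrite -(pair_big_dep xpredT (fun _ s => avoiding_involution k.+1 s) (fun _ s => F (fixn s))).
  by rewrite sumr_const card_ord.
by move=> x; rewrite inE.
Qed.

End Recurrence.

Lemma Fcoef_small k n : (n < k)%N -> Fcoef k n = J n.
Proof. by move=> n_lt; apply: eq_bigl => pi; rewrite avoidsFk_small // andbT. Qed.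

Lemma numAvoid_small k n : (n < k)%N -> numAvoid k n = Inv n.
Proof. by move=> n_lt; apply: eq_card => pi; rewrite !inE avoidsFk_small // andbT. Qed.

Lemma Fcoef_rec k m : (k <= m.+1)%N -> Fcoef k.+1 m.+2 = (Fcoef k.+1 m *+ k)%R.
Proof. move=> k_le; exact: (sum_avoiding_involutions_rec k_le (fun i => 'X^i)%R). Qed.

Lemma numAvoid_rec k m : (k <= m.+1)%N -> numAvoid k.+1 m.+2 = (k * numAvoid k.+1 m)%N.
Proof.
move=> k_le; rewrite /numAvoid -!sum1_card.
under eq_bigl => pi do rewrite inE.
under [in RHS]eq_bigl => pi do rewrite inE.
by rewrite (sum_avoiding_involutions_rec k_le (fun=> 1%N)) -mulr_natl !natrE.
Qed.

Lemma numAvoid_add2n k m n :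
  (k <= m.+1)%N -> numAvoid k.+1 (m + 2 * n) = (k ^ n * numAvoid k.+1 m)%N.
Proof.
move=> k_le; elim: n => [|n IHn]; first by rewrite muln0 addn0 mul1n.
rewrite mulnS addnCA add2n numAvoid_rec; last by lia.
by rewrite IHn expnS mulnA.
Qed.

Local Open Scope ring_scope.

Lemma sum_ord_mul_delta (R : pzSemiRingType) (G : nat -> R) n j :
  \sum_(i < n.+1) G i * ((n - i)%N == j)%:R = if (j <= n)%N then G (n - j)%N else 0.
Proof.
case: leqP => j_n; last first.
  rewrite big1 // => i _; rewrite (_ : (n - i == j)%N = false) ?mulr0 //.
  by have := ltn_ord i; lia.
rewrite (bigD1 (inord (n - j))) //= inordK; last lia.
rewrite subKn // eqxx mulr1 big1 ?addr0 // => i i_neq.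
rewrite (_ : (n - i == j)%N = false) ?mulr0 //; apply: contraNF i_neq => /eqP ij.
by apply/eqP/ord_inj; rewrite inordK; have := ltn_ord i; lia.
Qed.

Lemma fps_mul_denom (a : fps) k n : fps_mul a (fps_of (denom k)) n =
  a n - (if (1 < n)%N then a (n - 2)%N *+ k.-1 else 0).
Proof.
have coef_denom j : (denom k)`_j = (j == 0)%N%:R - (j == 2)%N%:R *+ k.-1.
  by rewrite coefB coef1 mulr_natl coefMn coefXn.
rewrite /fps_mul /fps_of.
under eq_bigr => i _ do rewrite coef_denom mulrBr (mulrnAr _ _ k.-1).
rewrite sumrB sumrMnl !sum_ord_mul_delta leq0n subn0.
by case: ifP => _; rewrite ?mul0rn.
Qed.

(* [Jtrunc k] agrees with [F_(k+1)] in degrees at most [k]. *)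
Definition Jtrunc k : {poly {poly int}} := \sum_(j < k.+1) (J j)%:P * 'X^j.

Lemma coef_Jtrunc k i : (Jtrunc k)`_i = if (i <= k)%N then J i else 0.
Proof.
rewrite /Jtrunc (eq_bigr (fun j : 'I_k.+1 => J j *: 'X^j)) => [|j _]; last first.
  by rewrite mul_polyC.
by rewrite -poly_def coef_poly ltnS.
Qed.

Lemma numerE k : numer k.+1 =
  Jtrunc k * denom k.+1 + k%:R * (((J k.-1)%:P + (J k)%:P * 'X) * 'X^(k.+1)).
Proof. by rewrite /numer /Jtrunc /denom big_ord_recr /= (exprS _ k); ring. Qed.

Lemma coef_numer k n : (numer k.+1)`_n =
  fps_mul (fps_of (Jtrunc k)) (fps_of (denom k.+1)) n +
  (if (n < k.+1)%N then 0 else ((J k.-1)%:P + (J k)%:P * 'X)`_(n - k.+1)) *+ k.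
Proof. by rewrite numerE [in LHS]coefD mulr_natl coefMn coefMXn coefM. Qed.

Lemma coef_Jtrunc_tail k n : (0 < k)%N -> (k < n)%N ->
  (Jtrunc k)`_(n - 2) = ((J k.-1)%:P + (J k)%:P * 'X)`_(n - k.+1).
Proof.
move=> k_gt0 k_lt; rewrite coef_Jtrunc coefD coefMX !coefC.
have [d ->] : exists d, n = (k.+1 + d)%N by exists (n - k.+1)%N; lia.
rewrite addKn; case: d => [|[|d]] /=.
- by rewrite addr0 (_ : (k.+1 + 0 - 2 = k.-1)%N) ?leq_pred //; lia.
- by rewrite add0r (_ : (k.+1 + 1 - 2 = k)%N) ?leqnn //; lia.
- by rewrite addr0 (_ : (k.+1 + d.+2 - 2 <= k)%N = false) //; lia.
Qed.

Lemma Fcoef_rec_sub2 k n : (0 < k)%N -> (k < n)%N ->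
  Fcoef k.+1 n = Fcoef k.+1 (n - 2) *+ k.
Proof.
case: n => [|[|m]] k_gt0 k_lt; try lia.
by rewrite !subSS subn0 Fcoef_rec.
Qed.

Lemma fps_mul_Fcoef_denom k : (0 < k)%N ->
  fps_mul (Fcoef k.+1) (fps_of (denom k.+1)) = fps_of (numer k.+1).
Proof.
move=> k_gt0; apply: functional_extensionality => n.
rewrite {2}/fps_of coef_numer !fps_mul_denom /= /fps_of.
case: (leqP n k) => [n_le | k_lt].
  have n2_le : (n - 2 <= k)%N by lia.
  by rewrite ltnS n_le mul0rn addr0 !coef_Jtrunc n_le n2_le !Fcoef_small ?ltnS.
rewrite (_ : (n < k.+1)%N = false); last by lia.
rewrite Fcoef_rec_sub2 // (_ : (1 < n)%N); last by lia.
by rewrite -coef_Jtrunc_tail // coef_Jtrunc leqNgt k_lt subrr sub0r addNr.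
Qed.

Unset Implicit Arguments.

Theorem theorem3p1 (k : nat) (hk : (2 <= k)%N) :
  fps_mul (Fcoef k) (fps_of (denom k)) = fps_of (numer k)
  /\ (forall n : nat,
        numAvoid k (k + 2 * n)%N = ((k.-1) ^ n.+1 * Inv (k.-2))%N)
  /\ (forall n : nat,
        numAvoid k (k + 2 * n - 1)%N = ((k.-1) ^ n * Inv (k.-1))%N).
Proof.
case: k hk => [|k] // k_gt0.
split; first exact: fps_mul_Fcoef_denom.
split => n /=.
- have -> : (k.+1 + 2 * n = k.-1 + 2 * n.+1)%N by lia.
  by rewrite numAvoid_add2n ?numAvoid_small //; lia.
- have -> : (k.+1 + 2 * n - 1 = k + 2 * n)%N by lia.
  by rewrite numAvoid_add2n ?numAvoid_small.
Qed.
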